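(* Fix $d\ge3$, let $C$ be an indeterminate, and let $\phi_{(d,C)}(x)=x^d-Cdx^{d-1}+C(d-1)\in\mathbb{Z}[C][x]$. For every $n\ge1$, all roots in $\overline{\mathbb{Q}}$ of the polynomial $\phi_{(C,n)}(0):=\phi_{(d,C)}^n(0)\in\mathbb{Z}[C]$ are simple.
   Context: $\phi^n$ denotes the $n$-fold iterate in the variable $x$. *)

From mathcomp Require Import all_boot all_order all_algebra all_field.
Set Implicit Arguments. Unset Strict Implicit. Unset Printing Implicit Defensive.
Import GRing.Theory Num.Theory.
Local Open Scope ring_scope.

(* The variable C is 'X : {poly int}; polynomials in x over Z[C] are
   {poly {poly int}}. *)
Definition phiC (d : nat) : {poly {poly int}} :=
  'X^d - (('X : {poly int}) *+ d)%:P * 'X^(d.-1)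
       + (('X : {poly int}) *+ (d.-1))%:P.

Definition phiCn (d n : nat) : {poly int} :=
  iter n (fun x : {poly int} => (phiC d).[x]) 0.

From mathcomp Require Import all_boot all_order all_algebra all_field ring zify.
Import GRing.Theory Num.Theory.
Local Open Scope ring_scope.

(* A multiple root z of P = phi^n(0) would also be a root of dP/dC.
   Differentiating the recursion in C shows dP/dC = d Q - 1 with Q in Z[C], so
   Q(z) = 1/d.  The leading coefficient L of P is prime to d (it is d - 1 for
   n = 1 and a power of -(d-1)^(d-1) afterwards) and L z is an algebraic
   integer; hence L^s Q(z) = L^s / d is a rational algebraic integer, so d
   divides L^s, which is absurd. *)

Lemma mup_simple_root (F : fieldType) (p : {poly F}) (x : F) :
  root p x -> ~~ root p^`() x -> mup x p = 1%N.
Proof.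
move=> px0 p'x; have p_nz : p != 0.
  by apply: contraNneq p'x => ->; rewrite deriv0 root0.
apply/eqP; rewrite eqn_leq mup_leq // mup_geq // expr1 dvdp_XsubCl px0 andbT.
apply: contra p'x => /dvdpP [r ->]; rewrite !derivE.
have -> : r^`() * ('X - x%:P) ^+ 2 + r * (1 * ('X - x%:P) + ('X - x%:P) * 1) =
  ('X - x%:P) * (r^`() * ('X - x%:P) + r *+ 2) by ring.
by rewrite rootM root_XsubC eqxx.
Qed.

Lemma lead_coef_root_Aint (p : {poly int}) (z : algC) :
  p != 0 -> root (map_poly intr p) z -> (lead_coef p)%:~R * z \in Aint.
Proof.
move=> p_nz pz0; set L := lead_coef p; set m := (size p).-1.
have size_p : size p = m.+1 by rewrite prednK ?size_poly_gt0.
have m_gt0 : (0 < m)%N.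
  rewrite lt0n; apply: contraTneq pz0 => m0.
  have /size1_polyC pC : (size p <= 1)%N by rewrite size_p m0.
  by rewrite pC map_polyC rootC intr_eq0 -(lead_coefC p`_0) -pC lead_coef_eq0.
(* M is monic with integer coefficients and M (L z) = L^(m-1) p(z). *)
pose M : {poly algC} := 'X^m + \poly_(i < m) (p`_i * L ^+ (m.-1 - i))%:~R.
apply: (@root_monic_Aint M).
- have pE : (map_poly intr p).[z] = \sum_(i < m.+1) (p`_i)%:~R * z ^+ i.
    rewrite (@horner_coef_wide _ m.+1); last first.
      by rewrite size_map_inj_poly ?size_p //; exact: intr_inj.
    by apply: eq_bigr => i _; rewrite coef_map.
  have Mz : M.[L%:~R * z] = L%:~R ^+ m.-1 * (map_poly intr p).[z].
    rewrite pE big_ord_recr /= mulrDr hornerD hornerXn horner_poly addrC.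
    congr (_ + _); last first.
      by rewrite -/L [p`_m]lead_coefE mulrA -exprSr prednK // exprMn.
    rewrite mulr_sumr; apply: eq_bigr => i _.
    have i_le : (i <= m.-1)%N by rewrite -ltnS prednK.
    rewrite rmorphM rmorphXn /= exprMn -[in RHS](subnK i_le) exprD; ring.
  by rewrite /root Mz (eqP pz0) mulr0.
- rewrite monicE lead_coefDl ?lead_coefXn // size_polyXn ltnS.
  exact: size_poly.
- apply/polyOverP => i; rewrite coefD coefXn coef_poly.
  by rewrite rpredD ?rpred_nat //; case: ifP; rewrite ?rpred0 ?rpred_int.
Qed.

Lemma Aint_exp_size_horner (q : {poly int}) (a z : algC) :
  a \in Aint -> a * z \in Aint -> a ^+ size q * (map_poly intr q).[z] \in Aint.
Proof.
move=> Aa Aaz; rewrite (@horner_coef_wide _ (size q)); last first.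
  by rewrite size_map_inj_poly //; exact: intr_inj.
rewrite mulr_sumr; apply: rpred_sum => i _; rewrite coef_map /=.
rewrite -[in a ^+ size q](subnK (ltnW (ltn_ord i))) exprD.
have -> : a ^+ (size q - i) * a ^+ i * ((q`_i)%:~R * z ^+ i) =
          (q`_i)%:~R * a ^+ (size q - i) * (a * z) ^+ i by rewrite exprMn; ring.
by rewrite !rpredM ?rpredX ?Aint_int.
Qed.

Lemma Aint_mul_nat_dvdn (w : algC) (d : nat) (m : int) :
  (0 < d)%N -> w \in Aint -> w * d%:R = m%:~R -> (d %| `|m|)%N.
Proof.
move=> d_gt0 Aw wdm; have d_nz : (d%:R : algC) != 0 by rewrite pnatr_eq0 -lt0n.
have w_rat : w \in Crat.
  apply/CratP; exists (m%:~R / d%:R).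
  by rewrite fmorph_div rmorph_int rmorph_nat -wdm mulfK.
have /intrP [k wk] := Cint_rat_Aint w_rat Aw.
have mkd : m = k * d%:R.
  by apply: (@intr_inj algC); rewrite -wdm wk rmorphM /= rmorph_nat.
by rewrite mkd abszM natz absz_nat dvdn_mull.
Qed.

Lemma simple_roots_of_deriv_congr (p Q : {poly int}) (d : nat) :
  (1 < d)%N -> coprime `|lead_coef p| d -> p^`() = Q *+ d - 1 ->
  forall z : algC, root (map_poly intr p) z -> mup z (map_poly intr p) = 1%N.
Proof.
move=> d_gt1 L_cop p'E z pz0.
have p_nz : p != 0.
  by apply: contraTneq L_cop => ->; rewrite lead_coef0 /coprime gcd0n gtn_eqF.
set L := lead_coef p in L_cop.
apply: mup_simple_root => //; apply/negP => p'z0.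
have dQz : (map_poly intr Q).[z] * d%:R = 1 :> algC.
  move: p'z0; rewrite deriv_map p'E rmorphB rmorphMn rmorph1 /root !hornerE.
  by rewrite subr_eq0 mulr_natr -hornerMn => /eqP.
have /Aint_mul_nat_dvdn : L%:~R ^+ size Q * (map_poly intr Q).[z] \in Aint.
  by apply: Aint_exp_size_horner; rewrite ?Aint_int ?lead_coef_root_Aint.
move/(_ d (L ^+ size Q) (ltnW d_gt1)); rewrite -mulrA dQz mulr1 rmorphXn.
move=> /(_ erefl); rewrite abszX => d_dvd.
by move: (coprimeXl (size Q) L_cop); rewrite /coprime (gcdn_idPr d_dvd) gtn_eqF.
Qed.

Lemma phiCn_S d n :
  phiCn d n.+1 = phiCn d n ^+ d - 'X *+ d * phiCn d n ^+ d.-1 + 'X *+ d.-1.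
Proof. by rewrite /phiCn iterS /phiC !hornerE. Qed.

Lemma deriv_phiCn_S d n : (0 < d)%N ->
  exists Q : {poly int}, (phiCn d n.+1)^`() = Q *+ d - 1.
Proof.
case: d => [//|k] _; rewrite phiCn_S /=; set P := phiCn k.+1 n.
exists (P^`() * P ^+ k - P ^+ k - 'X * (P^`() * P ^+ k.-1 *+ k) + 1).
rewrite !derivE !deriv_exp /=.
move: (P^`() * P ^+ k) (P ^+ k) (P^`() * P ^+ k.-1 *+ k) => A B E; ring.
Qed.

Lemma phiCn_1 d : (1 < d)%N -> phiCn d 1 = 'X *+ d.-1.
Proof.
move=> d_gt1; rewrite phiCn_S /phiCn /= !expr0n gtn_eqF ?(ltnW d_gt1) //.
by rewrite -subn1 subn_eq0 leqNgt d_gt1 mulr0 subrr add0r.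
Qed.

Lemma phiCn_2 k : (1 < k)%N ->
  phiCn k.+1 2 = (- (k%:R ^+ k))%:P * 'X^(k.+1) + 'X *+ k.
Proof.
move=> k_gt1; rewrite phiCn_S phiCn_1 ?ltnS ?(ltnW k_gt1) //=.
have X_mulrn m : ('X : {poly int}) *+ m = m%:R * 'X by rewrite mulr_natl.
rewrite !X_mulrn !exprMn polyCN rmorphXn /= polyC_natr !exprS.
move: ('X ^+ k : {poly int}) (k%:R ^+ k : {poly int}) => A B; ring.
Qed.

Lemma size_X_mulrn (k : nat) : (size (('X : {poly int}) *+ k) <= 2)%N.
Proof. by rewrite -scaler_nat (leq_trans (size_scale_leq _ _)) ?size_polyX. Qed.

Lemma size_phiC_tail d (P : {poly int}) : (3 <= d)%N -> (2 < size P)%N ->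
  (size (- ('X *+ d * P ^+ d.-1) + 'X *+ d.-1)%R < size (P ^+ d))%N.
Proof.
move=> d_ge3 P_gt2; set e := (size P).-1.
have P_nz : P != 0 by rewrite -size_poly_gt0 (ltn_trans _ P_gt2).
have e_gt1 : (1 < e)%N by rewrite -ltnS prednK // (ltn_trans _ P_gt2).
have size_Pd : size (P ^+ d) = (e * d).+1.
  by rewrite -(size_exp P d) prednK // size_poly_gt0 expf_neq0.
have size_XPd : (size ('X *+ d * P ^+ d.-1)%R <= (e * d.-1).+2)%N.
  have := size_polyMleq ('X *+ d) (P ^+ d.-1).
  have := size_poly_exp_leq P d.-1; have := size_X_mulrn d; lia.
have ed : (e * d.-1 + e = e * d)%N.
  by rewrite -mulnSr prednK // (ltn_trans _ d_ge3).
rewrite size_Pd (leq_ltn_trans (size_polyD _ _)) // size_polyN gtn_max.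
by rewrite (leq_ltn_trans size_XPd) ?(leq_ltn_trans (size_X_mulrn _)); lia.
Qed.

Lemma phiCn_SS_size_lead_coef d n : (3 <= d)%N ->
  (2 < size (phiCn d n.+2))%N /\ coprime `|lead_coef (phiCn d n.+2)| d.
Proof.
move=> d_ge3; elim: n => [|n [P_gt2 P_cop]].
  case: d d_ge3 => [//|k] k_gt1.
  have c_nz : (- (k%:R ^+ k) : int) != 0.
    by rewrite oppr_eq0 expf_neq0 // pnatr_eq0 -lt0n ltnW.
  have size_CX : size ((- (k%:R ^+ k))%:P * 'X^(k.+1) : {poly int}) = k.+2.
    by rewrite size_Cmul // size_polyXn.
  have size_X : (size (('X : {poly int}) *+ k) < k.+2)%N.
    by apply: leq_ltn_trans (size_X_mulrn k) _; rewrite !ltnS ltnW.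
  rewrite phiCn_2 // size_polyDl ?size_CX // lead_coefDl ?size_CX //.
  rewrite mul_polyC lead_coefZ lead_coefXn mulr1 abszN abszX natz absz_nat.
  by split; rewrite ?coprimeXl ?coprimenS // !ltnS ltnW.
rewrite phiCn_S -addrA size_polyDl ?lead_coefDl ?size_phiC_tail //.
split; last by rewrite lead_coef_exp abszX coprimeXl.
have e_ge2 : (2 <= (size (phiCn d n.+2)).-1)%N by lia.
by rewrite -ltn_predRL size_exp (leq_trans _ (leq_mul e_ge2 d_ge3)).
Qed.

Lemma phiCn_lead_coef_coprime d n : (3 <= d)%N -> (0 < n)%N ->
  coprime `|lead_coef (phiCn d n)| d.
Proof.
case: d => [//|k] k_gt1; case: n => [//|[_|n _]]; last first.
  by have [] := phiCn_SS_size_lead_coef _ n k_gt1.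
rewrite phiCn_1 ?(ltnW k_gt1) // -scaler_nat lead_coefZ lead_coefX mulr1.
by rewrite natz absz_nat coprimenS.
Qed.

Theorem lemma5p2 (d n : nat) :
  (3 <= d)%N -> (1 <= n)%N ->
  forall z : algC,
    root (map_poly intr (phiCn d n)) z -> mup z (map_poly intr (phiCn d n)) = 1%N.
Proof.
case: n => [//|m] d_ge3 _.
have [Q phi'E] := deriv_phiCn_S _ m (ltnW (ltnW d_ge3)).
apply: simple_roots_of_deriv_congr phi'E; first exact: ltnW.
exact: phiCn_lead_coef_coprime.
Qed.
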